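(* Consider the binary noisy-label setting described in the context, and assume ${\mathbb P}(Y=+1)={\mathbb P}(Y=-1)$ and $e_+=e_-$. Let $\mathcal H$ be a hypothesis space, $h^*_f\in\arg\max_{h\in\mathcal H}D_f(P_{h\times Y}\|Q_{h\times Y})$, and $\mathcal H^*$ as defined in the context. Then for each of the following $f$-divergences, $D_f$ is $\mathcal H^*$-robust, i.e. $h^*_f=\arg\max_{h\in\mathcal H^*}D_f(\tilde P_{h\times\tilde Y}\|\tilde Q_{h\times\tilde Y})$: Total Variation $f(v)=\frac12|v-1|$; Jenson–Shannon $f(v)=v\log v-(v+1)\log\frac{v+1}{2}$ (with $f^*(u)=-\log(2-e^u)$); Squared Hellinger $f(v)=(\sqrt v-1)^2$; Pearson $\chi^2$ $f(v)=(v-1)^2$; Neyman $\chi^2$ $f(v)=(1-v)^2/v$; KL $f(v)=v\log v$; Reverse KL $f(v)=-\log v$.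
   Context: $(X,Y)$ with $X\in\mathcal X$, $Y\in\{-1,+1\}$; noisy label $\tilde Y$ generated from $Y$, conditionally independently of $X$ given $Y$, with $e_+={\mathbb P}(\tilde Y=-1\mid Y=+1)$, $e_-={\mathbb P}(\tilde Y=+1\mid Y=-1)$, $e_++e_-<1$. A hypothesis space $\mathcal H$ is a set of classifiers $h:\mathcal X\to\{-1,+1\}$. $P_{h\times Y}(y,y')={\mathbb P}(h(X)=y,Y=y')$, $Q_{h\times Y}(y,y')={\mathbb P}(h(X)=y){\mathbb P}(Y=y')$, $\tilde P_{h\times\tilde Y},\tilde Q_{h\times\tilde Y}$ the same with $\tilde Y$; $D_f(P\|Q)=\sum_z q(z)f(p(z)/q(z))$. For $R\in\{Y,\tilde Y\}$ the fitness is ${\rm FIT}(h=y,R=y')=\frac{{\mathbb P}(h(X)=y\mid R=y')}{{\mathbb P}(h(X)=y)}$. Define $\mathcal H^*=\{h\in\mathcal H:\min_y{\rm FIT}(h=y,\tilde Y=y)\ge\max_y{\rm FIT}(h^*_f=y,Y=y)\ge1\}\cup\{h^*_f\}$. *)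

From HB Require Import structures.
From mathcomp Require Import all_boot all_order all_algebra.
From mathcomp Require Import all_classical all_reals all_analysis.
Set Implicit Arguments. Unset Strict Implicit. Unset Printing Implicit Defensive.
Import Order.TTheory GRing.Theory Num.Theory.
Local Open Scope classical_set_scope.
Local Open Scope ring_scope.

(* Labels in {-1,+1} are encoded as bool: true = +1, false = -1. *)

Section Defs.
Variables (R : realType) (d : measure_display) (T : measurableType d)
  (P : probability T R).

Definition pr (A : set T) : R := fine (P A).

(* for a classifier-valued r.v. H : T -> bool (H = h o X) and a label r.v. L *)
Definition Pjoint (H L : T -> bool) (y y' : bool) : R :=
  pr [set w | H w = y /\ L w = y'].
Definition Qprod (H L : T -> bool) (y y' : bool) : R :=
  pr [set w | H w = y] * pr [set w | L w = y'].

(* D_f(P||Q) = sum_z q(z) f(p(z)/q(z)), z ranging over {-1,+1}^2,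
   f extended-real valued (convention 0 * (+oo) = 0). *)
Definition Dfdiv (f : R -> \bar R) (p q : bool -> bool -> R) : \bar R :=
  (\sum_(y : bool) \sum_(y' : bool) (q y y')%:E * f (p y y' / q y y')%R)%E.

Definition FIT (H L : T -> bool) (y y' : bool) : R :=
  (pr [set w | H w = y /\ L w = y'] / pr [set w | L w = y'])
    / pr [set w | H w = y].

End Defs.

Inductive fdiv_kind :=
  TotalVariation | JensonShannon | SquaredHellinger | PearsonChi2
| NeymanChi2 | KLdiv | ReverseKL.

(* Generators f : [0,+oo) -> \bar R (only evaluated at v >= 0); the value
   +oo at v = 0 for Neyman chi^2 and reverse KL is the standard extension;
   0 * ln 0 = 0 (ln 0 = 0 in mathcomp-analysis). *)
Definition fgen (R : realType) (k : fdiv_kind) (v : R) : \bar R :=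
  match k with
  | TotalVariation => (`|v - 1| / 2)%:E
  | JensonShannon => (v * ln v - (v + 1) * ln ((v + 1) / 2))%:E
  | SquaredHellinger => ((Num.sqrt v - 1) ^+ 2)%:E
  | PearsonChi2 => ((v - 1) ^+ 2)%:E
  | NeymanChi2 => if v == 0 then +oo%E else ((1 - v) ^+ 2 / v)%:E
  | KLdiv => (v * ln v)%:E
  | ReverseKL => if v == 0 then +oo%E else (- ln v)%:E
  end.

From HB Require Import structures.
From mathcomp Require Import all_boot all_order all_algebra.
From mathcomp Require Import all_classical all_reals all_analysis.
From mathcomp Require Import ring lra.
Set Implicit Arguments. Unset Strict Implicit. Unset Printing Implicit Defensive.
Import Order.TTheory GRing.Theory Num.Theory.
Local Open Scope classical_set_scope.
Local Open Scope ring_scope.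

(* With balanced labels, the joint law of a classifier g and the label is determined by
   q = P(g = +1) and the imbalance δ = P(g = +1, Y = +1) - P(g = +1, Y = -1), and
   D_f = q/2 F(δ/q) + (1-q)/2 F(δ/(1-q)) with F t = f(1+t) + f(1-t); for each of the
   seven generators F vanishes at 0 and is strictly increasing on [0,1], by convexity of f.
   Symmetric noise at rate e keeps the noisy label balanced and multiplies every imbalance
   by c = 1 - 2e, while FIT(g = y, Y = y) = 1 + δ/P(g = y).  For h in H* other than h*, the
   fitness condition bounds both ratios δ*/P(h* = y) by c times the smaller ratio of h.  If
   δ_h > 0 the clean divergence of h* would then be strictly below that of h, contradicting
   the optimality of h*; so δ_h = 0 and the noisy divergence of h vanishes. *)

Section BalancedDivergence.
Variables (R : realType) (F : R -> \bar R).

Definition mass (y : bool) (q : R) := if y then q else 1 - q.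

Definition bal_div (q dl : R) : \bar R :=
  ((q / 2)%:E * F (dl / q) + ((1 - q) / 2)%:E * F (dl / (1 - q)))%E.

Definition bal_fit (y : bool) (q dl : R) : R := (mass y q + dl) / mass y q.

Lemma mass_ge0 {q : R} (y : bool) : 0 <= q <= 1 -> 0 <= mass y q.
Proof. by case: y => /andP[] /=; lra. Qed.

Lemma fit_ge1 {m x : R} : 0 <= m -> 1 <= (m + x) / m -> 0 < m /\ 0 <= x.
Proof.
rewrite le_eqVlt => /predU1P[<-|m0]; first by rewrite invr0 mulr0 ler10.
by rewrite ler_pdivlMr // mul1r lerDl.
Qed.

Lemma fit_le {m x r : R} : 0 <= m -> 0 <= r -> (m + x) / m <= 1 + r -> x / m <= r.
Proof.
rewrite le_eqVlt => /predU1P[<-|m0] r0; first by rewrite invr0 !mulr0.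
by rewrite mulrDl divff ?gt_eqF // lerD2l.
Qed.

Lemma fitE (m x : R) : 0 < m -> (m + x) / m = 1 + x / m.
Proof. by move=> m0; rewrite mulrDl divff // gt_eqF. Qed.

Lemma ratio_in01 {m x : R} : 0 <= m -> 0 <= x -> x <= m -> 0 <= x / m <= 1.
Proof.
rewrite le_eqVlt => /predU1P[<-|m0] x0 xm; first by rewrite invr0 mulr0 lexx ler01.
by rewrite divr_ge0 ?(ltW m0) //= ler_pdivrMr // mul1r.
Qed.

Hypothesis F0 : F 0 = 0%E.
Hypothesis F_lt : forall s t, 0 <= s -> s < t -> t <= 1 -> (F s < F t)%E.

Lemma F_le (s t : R) : 0 <= s -> s <= t -> t <= 1 -> (F s <= F t)%E.
Proof.
move=> s0; rewrite le_eqVlt => /predU1P[->//|st] t1.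
exact/ltW/F_lt.
Qed.

Lemma bal_div0 (q : R) : bal_div q 0 = 0%E.
Proof. by rewrite /bal_div !mul0r F0 !mule0 adde0. Qed.

Lemma half_split (q : R) (x : \bar R) : 0 <= q <= 1 ->
  ((1 / 2)%:E * x = (q / 2)%:E * x + ((1 - q) / 2)%:E * x)%E.
Proof.
move=> /andP[q0 q1]; have -> : 1 / 2 = q / 2 + (1 - q) / 2 :> R by field.
by rewrite EFinD ge0_muleDl // lee_fin; lra.
Qed.

Lemma bal_div_le {q dl t : R} : 0 <= q <= 1 -> t <= 1 ->
  (forall y, 0 <= dl / mass y q <= t) -> (bal_div q dl <= (1 / 2)%:E * F t)%E.
Proof.
move=> q01 t1 ratio; have /andP[q0 q1] := q01; rewrite (half_split _ q01).
have /andP[r1 r1t] := ratio true; have /andP[r0 r0t] := ratio false.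
by apply: leeD; apply: lee_wpmul2l; rewrite ?lee_fin ?divr_ge0 ?subr_ge0 //; apply: F_le.
Qed.

Lemma bal_div_ge {q dl t : R} : 0 <= q <= 1 -> 0 <= t ->
  (forall y, t <= dl / mass y q <= 1) -> ((1 / 2)%:E * F t <= bal_div q dl)%E.
Proof.
move=> q01 t0 ratio; have /andP[q0 q1] := q01; rewrite (half_split _ q01).
have /andP[r1 r1t] := ratio true; have /andP[r0 r0t] := ratio false.
by apply: leeD; apply: lee_wpmul2l; rewrite ?lee_fin ?divr_ge0 ?subr_ge0 //; apply: F_le.
Qed.

Lemma bal_div_lt_of_fit_le (c q dl qs dls : R) : 0 < c < 1 ->
  0 <= q <= 1 -> (forall y, 0 < mass y q) -> (forall y, dl <= mass y q) -> 0 < dl ->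
  0 <= qs <= 1 -> 0 <= dls ->
  (forall y y0, bal_fit y0 qs dls <= bal_fit y q (c * dl)) ->
  (bal_div qs dls < bal_div q dl)%E.
Proof.
move=> /andP[c0 c1] q01 mass_pos dl_le dl0 qs01 dls0 fit_le_noisy.
have [y1 min_y1] : exists y1, forall y, dl / mass y1 q <= dl / mass y q.
  by case: (leP (dl / q) (dl / (1 - q))) => h; [exists true|exists false]; case=> //=; apply: ltW.
set w := dl / mass y1 q in min_y1.
have w_gt0 : 0 < w by rewrite divr_gt0.
have ratio_le1 y : dl / mass y q <= 1.
  by have /andP[] := ratio_in01 (mass_ge0 y q01) (ltW dl0) (dl_le y).
have ratio_h y : w <= dl / mass y q <= 1 by rewrite min_y1 ratio_le1.
have ratio_hs y : 0 <= dls / mass y qs <= c * w.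
  rewrite divr_ge0 ?(mass_ge0 y qs01) //=.
  apply: fit_le (mass_ge0 y qs01) (mulr_ge0 (ltW c0) (ltW w_gt0)) _.
  by have := fit_le_noisy y1 y; rewrite {2}/bal_fit fitE // -mulrA.
have w_le1 : w <= 1 := ratio_le1 y1.
have cw_le1 : c * w <= 1 by nra.
apply: le_lt_trans (bal_div_le qs01 cw_le1 ratio_hs) _.
apply: lt_le_trans (bal_div_ge q01 (ltW w_gt0) ratio_h).
rewrite lte_pmul2l ?lte_fin //; apply: F_lt; rewrite ?ratio_le1 ?gtr_pMl //.
exact: mulr_ge0 (ltW c0) (ltW w_gt0).
Qed.

Lemma bal_div_contract_le (c q dl qs dls : R) : 0 < c <= 1 ->
  0 <= q <= 1 -> (forall y, dl <= mass y q) ->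
  0 <= qs <= 1 -> (forall y, dls <= mass y qs) ->
  (bal_div q dl <= bal_div qs dls)%E ->
  (forall y y0, bal_fit y0 qs dls <= bal_fit y q (c * dl)) ->
  (exists y0, 1 <= bal_fit y0 qs dls) ->
  (bal_div q (c * dl) <= bal_div qs (c * dls))%E.
Proof.
move=> /andP[c0 c1] q01 dl_le qs01 dls_le le_div fit_le_noisy [y0 fit_y0].
have [->|c_neq1] := eqVneq c 1; first by rewrite !mul1r.
have c01 : 0 < c < 1 by rewrite c0 lt_neqAle c_neq1.
have mass_pos y : 0 < mass y q /\ 0 <= c * dl.
  by apply: fit_ge1 (mass_ge0 y q01) _; apply: le_trans fit_y0 (fit_le_noisy y y0).
have dl0 : 0 <= dl by have [_] := mass_pos true; rewrite pmulr_rge0.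
have dls0 : 0 <= dls by have [] := fit_ge1 (x := dls) (mass_ge0 y0 qs01) fit_y0.
have [->|dl_neq0] := eqVneq dl 0.
  rewrite mulr0 bal_div0 // -(mule0 (1 / 2)%:E) -F0; apply: bal_div_ge => // y.
  apply: ratio_in01; [exact: mass_ge0 y qs01|exact: mulr_ge0 (ltW c0) dls0|].
  by have := dls_le y; nra.
have dl_gt0 : 0 < dl by rewrite lt_neqAle eq_sym dl_neq0.
move: le_div; rewrite leNgt => /negP[].
apply: (bal_div_lt_of_fit_le c01 q01 (fun y => (mass_pos y).1) dl_le dl_gt0 qs01 dls0).
exact: fit_le_noisy.
Qed.

End BalancedDivergence.

Section Generators.
Variable R : realType.

Lemma ln_lt_subr1 {z : R} : 0 < z -> z != 1 -> ln z < z - 1.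
Proof.
move=> z0 z1; have := @expR_gt1Dx R (ln z); rewrite lnK ?posrE // ln_eq0 // z1.
by move=> /(_ isT); lra.
Qed.

Lemma mul_ln_lt {a b : R} : 0 < a -> 0 < b -> a != b -> b * (ln a - ln b) < a - b.
Proof.
move=> a0 b0 ab; rewrite -ln_div ?posrE //.
have ab1 : a / b != 1.
  by apply: contra ab => /eqP ab1; rewrite -(divfK (lt0r_neq0 b0) a) ab1 mul1r.
have := ln_lt_subr1 (divr_gt0 a0 b0) ab1.
by rewrite -(ltr_pM2l b0) mulrBr mulrCA divff ?gt_eqF // !mulr1.
Qed.

Lemma mul_ln_le {a b : R} : 0 < a -> 0 < b -> b * (ln a - ln b) <= a - b.
Proof.
move=> a0 b0; have [->|ab] := eqVneq a b; first by rewrite !subrr mulr0.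
exact/ltW/mul_ln_lt.
Qed.

Lemma sym_lt_of_tangent {phi g : R -> R} :
  (forall x y, 0 < x -> 0 <= y -> y != x -> g x * (y - x) < phi y - phi x) ->
  (forall x y, 0 < x -> x <= y -> g x <= g y) ->
  forall s t, 0 <= s -> s < t -> t <= 1 ->
  phi (1 + s) + phi (1 - s) < phi (1 + t) + phi (1 - t).
Proof.
move=> tangent g_le s t s0 st t1.
have right := tangent (1 + s) (1 + t) ltac:(lra) ltac:(lra) ltac:(apply/eqP; lra).
have left := tangent (1 - s) (1 - t) ltac:(lra) ltac:(lra) ltac:(apply/eqP; lra).
have g_mono := g_le (1 - s) (1 + s) ltac:(lra) ltac:(lra).
have : 0 <= (t - s) * (g (1 + s) - g (1 - s)) by apply: mulr_ge0; lra.
nra.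
Qed.

Lemma kl_sym_lt (s t : R) : 0 <= s -> s < t -> t <= 1 ->
  (1 + s) * ln (1 + s) + (1 - s) * ln (1 - s) < (1 + t) * ln (1 + t) + (1 - t) * ln (1 - t).
Proof.
apply: (sym_lt_of_tangent (phi := fun v => v * ln v) (g := fun x => 1 + ln x)).
- move=> x y x0; rewrite le_eqVlt => /predU1P[<-|y0] yx; first by rewrite mul0r; nra.
  by rewrite eq_sym in yx; have := mul_ln_lt x0 y0 yx; nra.
- by move=> x1 x2 x10 x12; rewrite lerD2l ler_ln ?posrE //; lra.
Qed.

Definition jensen_shannon (v : R) := v * ln v - (v + 1) * ln ((v + 1) / 2).

Lemma js_tangent (x y : R) : 0 < x -> 0 <= y -> y != x ->
  (ln x + ln 2 - ln (x + 1)) * (y - x) < jensen_shannon y - jensen_shannon x.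
Proof.
move=> x0 y0 yx; rewrite /jensen_shannon.
have ln_half v : 0 <= v -> ln ((v + 1) / 2) = ln (v + 1) - ln 2.
  by move=> v0; rewrite ln_div ?posrE //; lra.
rewrite !ln_half; try lra.
set A := y * (ln y + ln (x + 1) - ln x - ln (y + 1)).
set B := ln (x + 1) - ln (y + 1).
suff : 0 < (x + 1) * (A + B) by rewrite /A /B pmulr_rgt0; [lra|lra].
have hA : y - x <= (x + 1) * A.
  have [y_eq0|yn0] := eqVneq y 0; first by rewrite /A y_eq0 !mul0r mulr0; lra.
  have yp : 0 < y by rewrite lt_neqAle eq_sym yn0.
  have [xy yx'] : 0 < x * (y + 1) /\ 0 < y * (x + 1) by split; nra.
  have := mul_ln_le xy yx'.
  by rewrite !lnM ?posrE /A; try lra; nra.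
have hB : x - y < (x + 1) * B.
  have y1x1 : y + 1 != x + 1 by rewrite (can_eq (addrK 1)).
  by have := mul_ln_lt (ltr_wpDl y0 ltr01) (ltr_wpDl (ltW x0) ltr01) y1x1; rewrite /B; nra.
nra.
Qed.

Lemma js_sym_lt (s t : R) : 0 <= s -> s < t -> t <= 1 ->
  jensen_shannon (1 + s) + jensen_shannon (1 - s) <
  jensen_shannon (1 + t) + jensen_shannon (1 - t).
Proof.
apply: (sym_lt_of_tangent (phi := jensen_shannon) (g := fun x => ln x + ln 2 - ln (x + 1))).
  exact: js_tangent.
move=> x1 x2 x10 x12.
suff : ln x1 + ln (x2 + 1) <= ln x2 + ln (x1 + 1) by lra.
by rewrite -!lnM ?posrE ?ler_ln ?posrE; try lra; nra.
Qed.

Lemma hellinger_sym_lt (s t : R) : 0 <= s -> s < t -> t <= 1 ->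
  (Num.sqrt (1 + s) - 1) ^+ 2 + (Num.sqrt (1 - s) - 1) ^+ 2 <
  (Num.sqrt (1 + t) - 1) ^+ 2 + (Num.sqrt (1 - t) - 1) ^+ 2.
Proof.
apply: (sym_lt_of_tangent (phi := fun v => (Num.sqrt v - 1) ^+ 2)
  (g := fun x => 1 - (Num.sqrt x)^-1)).
- move=> x y x0 y0 yx; rewrite -subr_gt0.
  have a0 : 0 < Num.sqrt x by rewrite sqrtr_gt0.
  have hx : x = Num.sqrt x ^+ 2 by rewrite sqr_sqrtr // ltW.
  have hy : y = Num.sqrt y ^+ 2 by rewrite sqr_sqrtr.
  have ba : Num.sqrt y - Num.sqrt x != 0.
    by rewrite subr_eq0; apply: contra yx => /eqP e; rewrite hx hy e.
  set a := Num.sqrt x in a0 hx ba *; set b := Num.sqrt y in hy ba *.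
  have -> : (b - 1) ^+ 2 - (a - 1) ^+ 2 - (1 - a^-1) * (y - x) = (b - a) ^+ 2 / a.
    by rewrite hx hy; field; rewrite lt0r_neq0.
  by rewrite divr_gt0 // exprn_even_gt0 // ba orbT.
- move=> x1 x2 x10 x12; rewrite lerD2l lerN2 lef_pV2 ?posrE ?sqrtr_gt0 ?ler_sqrt //; lra.
Qed.

Lemma neyman_sym_lt (s t : R) : 0 <= s -> s < t -> t < 1 ->
  (1 - (1 + s)) ^+ 2 / (1 + s) + (1 - (1 - s)) ^+ 2 / (1 - s) <
  (1 - (1 + t)) ^+ 2 / (1 + t) + (1 - (1 - t)) ^+ 2 / (1 - t).
Proof.
move=> s0 st t1.
have sq_lt1 (x : R) : 0 <= x < 1 -> 0 < 1 - x ^+ 2.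
  by move=> /andP[x0 x1]; rewrite subr_gt0 expr2; nra.
have closed (x : R) : 0 <= x < 1 ->
    (1 - (1 + x)) ^+ 2 / (1 + x) + (1 - (1 - x)) ^+ 2 / (1 - x) = 2 * x ^+ 2 / (1 - x ^+ 2).
  move=> x01; have /andP[x0 x1] := x01; field.
  by rewrite !gt_eqF ?sq_lt1 //; lra.
have s01 : 0 <= s < 1 by rewrite s0 (lt_trans st t1).
have t01 : 0 <= t < 1 by rewrite t1 andbT; lra.
rewrite !closed // ltr_pdivrMr ?sq_lt1 // mulrAC ltr_pdivlMr ?sq_lt1 //.
rewrite -subr_gt0 (_ : _ - _ = 2 * (t ^+ 2 - s ^+ 2)); last by ring.
by rewrite mulr_gt0 // subr_gt0 !expr2; nra.
Qed.

Lemma reverse_kl_sym_lt (s t : R) : 0 <= s -> s < t -> t < 1 ->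
  - ln (1 + s) - ln (1 - s) < - ln (1 + t) - ln (1 - t).
Proof.
move=> s0 st t1; rewrite -!opprD ltrN2 -!lnM ?posrE; try lra.
by rewrite ltr_ln ?posrE; nra.
Qed.

Definition fgen_sym (k : fdiv_kind) (t : R) : \bar R := (fgen k (1 + t) + fgen k (1 - t))%E.

Lemma fgen_adde_def k (x y : R) : (fgen k x +? fgen k y)%E.
Proof. by case: k => //=; case: (x == 0); case: (y == 0). Qed.

Lemma fgen_row k (m dl : R) : (m = 0 -> dl = 0) ->
  ((m / 2)%:E * fgen k ((m + dl) / 2 / (m / 2)) + (m / 2)%:E * fgen k ((m - dl) / 2 / (m / 2)) =
   (m / 2)%:E * fgen_sym k (dl / m))%E.
Proof.
have [-> /(_ erefl) ->|m_neq0 _] := eqVneq m 0; first by rewrite !mul0r !mul0e adde0.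
rewrite /fgen_sym muleDr ?fgen_adde_def //.
by congr (_ * fgen k _ + _ * fgen k _)%E; field.
Qed.

Lemma fgen_sym0 k : fgen_sym k 0 = 0%E.
Proof.
rewrite /fgen_sym addr0 subr0; case: k => /=;
  rewrite ?oner_eq0 ?ln1 ?sqrtr1 ?subrr ?expr0n ?normr0 /= ?mul0r ?mulr0 ?oppr0 ?adde0 //.
by rewrite (_ : (1 + 1) / 2 = 1 :> R) ?ln1 ?mulr0 ?subrr ?adde0 //; field.
Qed.

Lemma fgen_sym_lt k (s t : R) : 0 <= s -> s < t -> t <= 1 -> (fgen_sym k s < fgen_sym k t)%E.
Proof.
move=> s0 st t1; rewrite /fgen_sym.
have [pos_s pos_s' pos_t] : [/\ 1 + s != 0, 1 - s != 0 & 1 + t != 0].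
  by split; rewrite gt_eqF //; lra.
have below1 : t != 1 -> 1 - t != 0 /\ t < 1.
  by move=> t_neq1; rewrite subr_eq0 eq_sym t_neq1 lt_neqAle t_neq1.
case: k => /=; rewrite ?(negbTE pos_s) ?(negbTE pos_s') ?(negbTE pos_t).
- have tv (x : R) : 0 <= x -> `|1 + x - 1| / 2 + `|1 - x - 1| / 2 = x.
    by move=> x0; rewrite addrAC subrr add0r addrAC subrr add0r normrN ger0_norm //; field.
  by rewrite -!EFinD lte_fin !tv //; lra.
- by rewrite -!EFinD lte_fin; apply: js_sym_lt.
- by rewrite -!EFinD lte_fin; apply: hellinger_sym_lt.
- by rewrite -!EFinD lte_fin; nra.
- have [->|/below1[/negbTE-> t_lt1]] := eqVneq t 1.
    by rewrite subrr eqxx addey // -EFinD ltry.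
  by rewrite -!EFinD lte_fin; apply: neyman_sym_lt.
- by rewrite -!EFinD lte_fin; apply: kl_sym_lt.
- have [->|/below1[/negbTE-> t_lt1]] := eqVneq t 1.
    by rewrite subrr eqxx addey // -EFinD ltry.
  by rewrite -!EFinD lte_fin; apply: reverse_kl_sym_lt.
Qed.

End Generators.

Section Probability.
Variables (R : realType) (d : measure_display) (T : measurableType d) (P : probability T R).

Lemma measurable_eq_bool (g : T -> bool) (y : bool) :
  measurable_fun setT g -> measurable [set w | g w = y].
Proof. by move=> mg; have := mg measurableT [set y] I; rewrite setTI. Qed.

Lemma pr_ge0 (A : set T) : 0 <= pr P A.
Proof. exact/fine_ge0/measure_ge0. Qed.

Lemma pr_split (L : T -> bool) (A : set T) (S : bool -> set T) :
  (forall b, measurable (S b)) -> (forall b w, S b w <-> A w /\ L w = b) ->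
  pr P A = pr P (S true) + pr P (S false).
Proof.
move=> mS SE; have prE B : measurable B -> P B = (pr P B)%:E.
  by move=> mB; rewrite /pr fineK // fin_num_measure.
have -> : A = S true `|` S false.
  apply/seteqP; split=> [w Aw|w [/SE[]//|/SE[]//]].
  by case Lw: (L w); [left|right]; apply/SE.
have disj : S true `&` S false = set0.
  by apply/seteqP; split=> // w [/SE[_ Lw] /SE[_]]; rewrite Lw.
by apply: EFin_inj; rewrite EFinD -!prE ?measureU //; apply: measurableU.
Qed.

Lemma pr_total (L : T -> bool) : measurable_fun setT L ->
  pr P [set w | L w = true] + pr P [set w | L w = false] = 1.
Proof.
move=> mL; have <- : pr P setT = 1 by rewrite /pr probability_setT.
apply: esym; apply: (pr_split (L := L) (S := fun b => [set w | L w = b])) => [b|b w].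
  exact: measurable_eq_bool.
by split=> // -[].
Qed.

Lemma measurable_eq_bool2 (g L : T -> bool) (y y' : bool) :
  measurable_fun setT g -> measurable_fun setT L ->
  measurable [set w | g w = y /\ L w = y'].
Proof. by move=> mg mL; apply: measurableI; exact: measurable_eq_bool. Qed.

Lemma pr_marginal_r (g L : T -> bool) (y : bool) :
  measurable_fun setT g -> measurable_fun setT L ->
  pr P [set w | g w = y] =
  pr P [set w | g w = y /\ L w = true] + pr P [set w | g w = y /\ L w = false].
Proof.
move=> mg mL; apply: (pr_split (L := L) (S := fun b => [set w | g w = y /\ L w = b])) => //.
by move=> b; exact: measurable_eq_bool2.
Qed.

Lemma pr_marginal_l (g L : T -> bool) (y' : bool) :
  measurable_fun setT g -> measurable_fun setT L ->
  pr P [set w | L w = y'] =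
  pr P [set w | g w = true /\ L w = y'] + pr P [set w | g w = false /\ L w = y'].
Proof.
move=> mg mL; apply: (pr_split (L := g) (S := fun b => [set w | g w = b /\ L w = y'])).
  by move=> b; exact: measurable_eq_bool2.
by move=> b w /=; split=> -[].
Qed.

Lemma pr_marginal_mid (g L M : T -> bool) (y y' : bool) :
  measurable_fun setT g -> measurable_fun setT L -> measurable_fun setT M ->
  pr P [set w | g w = y /\ M w = y'] =
  pr P [set w | g w = y /\ L w = true /\ M w = y'] +
  pr P [set w | g w = y /\ L w = false /\ M w = y'].
Proof.
move=> mg mL mM.
apply: (pr_split (L := L) (S := fun b => [set w | g w = y /\ L w = b /\ M w = y'])).
  by move=> b; apply: measurableI; [|apply: measurableI]; exact: measurable_eq_bool.
by move=> b w /=; tauto.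
Qed.

End Probability.

Definition imbalance (R : realType) (d : measure_display) (T : measurableType d)
    (P : probability T R) (g L : T -> bool) : R :=
  pr P [set w | g w = true /\ L w = true] - pr P [set w | g w = true /\ L w = false].

Section BalancedTable.
Variables (R : realType) (d : measure_display) (T : measurableType d) (P : probability T R).
Variables (g L : T -> bool).
Hypotheses (mg : measurable_fun setT g) (mL : measurable_fun setT L).
Hypothesis L_half : forall y, pr P [set w | L w = y] = 1 / 2.

Let q := pr P [set w | g w = true].
Let dl := imbalance P g L.

Lemma bal_cells :
  [/\ pr P [set w | g w = false] = 1 - q,
      pr P [set w | g w = true /\ L w = true] = (q + dl) / 2,
      pr P [set w | g w = true /\ L w = false] = (q - dl) / 2,
      pr P [set w | g w = false /\ L w = true] = (1 - q - dl) / 2 &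
      pr P [set w | g w = false /\ L w = false] = (1 - q + dl) / 2].
Proof.
have := pr_total P mg; have := pr_marginal_r P true mg mL.
have := pr_marginal_l P true mg mL; have := pr_marginal_l P false mg mL.
rewrite !L_half /q /dl /imbalance; split; lra.
Qed.

Lemma bal_table_bounds :
  [/\ 0 <= q <= 1, forall y, dl <= mass y q & forall y, - dl <= mass y q].
Proof.
have [g_false tt tf ft ff] := bal_cells.
have := pr_ge0 P [set w | g w = true /\ L w = true].
have := pr_ge0 P [set w | g w = true /\ L w = false].
have := pr_ge0 P [set w | g w = false /\ L w = true].
have := pr_ge0 P [set w | g w = false /\ L w = false].
rewrite tt tf ft ff => *; split; first by apply/andP; lra.
- by case=> /=; lra.
- by case=> /=; lra.
Qed.

Lemma Dfdiv_bal k : Dfdiv (fgen k) (Pjoint P g L) (Qprod P g L) = bal_div (fgen_sym k) q dl.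
Proof.
have [g_false tt tf ft ff] := bal_cells.
have [_ dl_le dl_ge] := bal_table_bounds.
have /= := dl_le true; have /= := dl_le false; have /= := dl_ge true; have /= := dl_ge false => *.
rewrite /Dfdiv !big_bool /Pjoint /Qprod /= !L_half g_false tt tf ft ff !mul1r -/q.
rewrite fgen_row => [|q_eq0]; last lra.
by rewrite [X in (_ + X)%E]addeC fgen_row // => q_eq1; lra.
Qed.

Lemma FIT_bal y : FIT P g L y y = bal_fit y q dl.
Proof.
have [g_false tt tf ft ff] := bal_cells.
by case: y; rewrite /FIT /bal_fit /= L_half ?g_false ?tt ?ff; congr (_ / _); field.
Qed.

End BalancedTable.

Section SymmetricNoise.
Variables (R : realType) (d : measure_display) (T : measurableType d) (P : probability T R).
Variables (dx : measure_display) (Xsp : measurableType dx) (X : T -> Xsp) (Y Yt : T -> bool).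
Hypotheses (mX : measurable_fun setT X) (mY : measurable_fun setT Y)
  (mYt : measurable_fun setT Yt).
Hypothesis cond_indep : forall (A : set Xsp), measurable A -> forall y y' : bool,
  pr P [set w | A (X w) /\ Y w = y /\ Yt w = y'] * pr P [set w | Y w = y]
  = pr P [set w | A (X w) /\ Y w = y] * pr P [set w | Y w = y /\ Yt w = y'].
Variable e : R.
Hypothesis flip_true :
  e = pr P [set w | Yt w = false /\ Y w = true] / pr P [set w | Y w = true].
Hypothesis flip_false :
  e = pr P [set w | Yt w = true /\ Y w = false] / pr P [set w | Y w = false].
Hypothesis Y_bal : pr P [set w | Y w = true] = pr P [set w | Y w = false].

Lemma label_half y : pr P [set w | Y w = y] = 1 / 2.
Proof. by have := pr_total P mY; have := Y_bal; case: y; lra. Qed.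

Lemma pr_label_flip y y' :
  pr P [set w | Y w = y /\ Yt w = y'] = (if y == y' then 1 - e else e) / 2.
Proof.
have swap b b' : [set w | Yt w = b' /\ Y w = b] = [set w | Y w = b /\ Yt w = b'].
  by apply/seteqP; split=> w /= [].
have flip b : pr P [set w | Y w = b /\ Yt w = ~~ b] = e / 2.
  by case: b => /=; [rewrite flip_true|rewrite flip_false]; rewrite swap label_half; field.
have := pr_marginal_r P y mY mYt; have := flip y.
by rewrite label_half; case: y y' => -[] /= flip_y marginal; rewrite ?flip_y //; lra.
Qed.

Lemma noisy_label_half y' : pr P [set w | Yt w = y'] = 1 / 2.
Proof. by rewrite (pr_marginal_l P y' mY mYt) !pr_label_flip; case: y' => /=; field. Qed.

Lemma pr_noisy_cell (h : Xsp -> bool) y y' : measurable_fun setT h ->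
  pr P [set w | (h \o X) w = y /\ Yt w = y'] =
  2 * (pr P [set w | (h \o X) w = y /\ Y w = true] * pr P [set w | Y w = true /\ Yt w = y'] +
       pr P [set w | (h \o X) w = y /\ Y w = false] * pr P [set w | Y w = false /\ Yt w = y']).
Proof.
move=> mh; have mA := measurable_eq_bool y mh.
have := cond_indep mA true y'; have := cond_indep mA false y'.
rewrite (pr_marginal_mid P y y' (measurableT_comp mh mX) mY mYt) !label_half /=; lra.
Qed.

Lemma imbalance_noisy (h : Xsp -> bool) : measurable_fun setT h ->
  imbalance P (h \o X) Yt = (1 - 2 * e) * imbalance P (h \o X) Y.
Proof. by move=> mh; rewrite /imbalance !pr_noisy_cell // !pr_label_flip /=; field. Qed.

Lemma flip_rate_ge0 : 0 <= e.
Proof. by rewrite flip_true label_half divr_ge0 ?pr_ge0. Qed.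

End SymmetricNoise.

Theorem theorem8 (R : realType) (d : measure_display) (T : measurableType d)
  (P : probability T R) (dx : measure_display) (Xsp : measurableType dx)
  (X : T -> Xsp) (Y Yt : T -> bool)
  (mX : measurable_fun setT X) (mY : measurable_fun setT Y)
  (mYt : measurable_fun setT Yt)
  (* noisy label conditionally independent of X given Y *)
  (cond_indep : forall (A : set Xsp), measurable A -> forall y y' : bool,
      pr P [set w | A (X w) /\ Y w = y /\ Yt w = y'] * pr P [set w | Y w = y]
      = pr P [set w | A (X w) /\ Y w = y] * pr P [set w | Y w = y /\ Yt w = y'])
  (* e_+ = P(Yt=-1 | Y=+1), e_- = P(Yt=+1 | Y=-1) *)
  (eplus eminus : R)
  (Heplus : eplus = pr P [set w | Yt w = false /\ Y w = true] / pr P [set w | Y w = true])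
  (Heminus : eminus = pr P [set w | Yt w = true /\ Y w = false] / pr P [set w | Y w = false])
  (Hnoise : eplus + eminus < 1)
  (Hbal : pr P [set w | Y w = true] = pr P [set w | Y w = false])
  (Hsym : eplus = eminus)
  (H : set (Xsp -> bool))
  (Hmeas : forall h, H h -> measurable_fun setT h)
  (k : fdiv_kind) (hstar : Xsp -> bool)
  (Hhstar_in : H hstar)
  (Hhstar_max : forall h, H h ->
     (Dfdiv (@fgen R k) (Pjoint P (h \o X) Y) (Qprod P (h \o X) Y)
      <= Dfdiv (@fgen R k) (Pjoint P (hstar \o X) Y) (Qprod P (hstar \o X) Y))%E) :
  let Hstar : set (Xsp -> bool) :=
    [set h | H h /\
       (forall y : bool, forall y0 : bool,
          FIT P (hstar \o X) Y y0 y0 <= FIT P (h \o X) Yt y y) /\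
       (exists y0 : bool, 1 <= FIT P (hstar \o X) Y y0 y0)] `|` [set hstar] in
  forall h, Hstar h ->
    (Dfdiv (@fgen R k) (Pjoint P (h \o X) Yt) (Qprod P (h \o X) Yt)
     <= Dfdiv (@fgen R k) (Pjoint P (hstar \o X) Yt) (Qprod P (hstar \o X) Yt))%E.
Proof.
move=> Hstar h [[Hh [fit_le_noisy [y0 fit_y0]]]|->] //.
rewrite -Hsym in Heminus.
have [mh mhs] := (Hmeas h Hh, Hmeas hstar Hhstar_in).
have [mhX mhsX] := (measurableT_comp mh mX, measurableT_comp mhs mX).
have Y_half := label_half mY Hbal.
have Yt_half := noisy_label_half mY mYt Heplus Heminus Hbal.
have noisy := imbalance_noisy mX mY mYt cond_indep Heplus Heminus Hbal.
have [q01 dl_le _] := bal_table_bounds mhX mY Y_half.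
have [qs01 dls_le _] := bal_table_bounds mhsX mY Y_half.
rewrite (Dfdiv_bal mhX mYt Yt_half) (Dfdiv_bal mhsX mYt Yt_half) (noisy h mh) (noisy hstar mhs).
apply: (bal_div_contract_le (fgen_sym0 R k) (@fgen_sym_lt R k) _ q01 dl_le qs01 dls_le).
- by have := flip_rate_ge0 mY Heplus Hbal => e0; apply/andP; split; lra.
- by rewrite -(Dfdiv_bal mhX mY Y_half) -(Dfdiv_bal mhsX mY Y_half); exact: Hhstar_max.
- move=> y y'; rewrite -(FIT_bal mhsX mY Y_half) -noisy //.
  by rewrite -(FIT_bal mhX mYt Yt_half).
- by exists y0; rewrite -(FIT_bal mhsX mY Y_half).
Qed.
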